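(* Let $k\ge 2$, $\tau=1000k$, $\rho=1-\frac{1}{10\tau}$, and let $g:\{0,1\}^n\to\{0,1\}$ be a $k$-term DNF. If $y^0\in\{0,1\}^n$ satisfies $g_{\le 1000\tau\log k}(y^0)=0$, then $T_\rho g(y^0)\le 0.1$.
   Context: $g_{\le L}$ is the sub-DNF of $g$ consisting of terms with at most $L$ literals. For $x\in\{0,1\}^n$, $\mathbf{y}\sim N_\rho(x)$ means each bit independently has $\mathbf{y}_i=x_i$ with probability $\rho$ and $\mathbf{y}_i=1-x_i$ with probability $1-\rho$. The noise operator is $T_\rho g(x)=\mathbb{E}_{\mathbf{y}\sim N_\rho(x)}[g(\mathbf{y})]$. *)

From HB Require Import structures.
From mathcomp Require Import all_boot all_order all_algebra.
From mathcomp Require Import reals exp.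
Set Implicit Arguments. Unset Strict Implicit. Unset Printing Implicit Defensive.
Import Order.TTheory GRing.Theory Num.Theory.
Local Open Scope ring_scope.

(* A literal over n variables: (i, b) means "x_i = b" (b = true: x_i, b = false: not x_i). *)
Notation dterm n := {set ('I_n * bool)}.
Notation dnf n := (seq (dterm n)).
Notation cube n := {ffun 'I_n -> bool}.

Definition term_sat n (t : dterm n) (x : cube n) : bool :=
  [forall l in t, x l.1 == l.2].

Definition dnf_eval n (g : dnf n) (x : cube n) : bool :=
  has (fun t => term_sat t x) g.

Definition dnf_trunc (R : realType) n (L : R) (g : dnf n) : dnf n :=
  filter (fun t : dterm n => (#|t|%:R <= L)) g.

(* Noise operator: T_rho g(x) = E_{y ~ N_rho(x)} [g(y)], where each bit y_i
   independently equals x_i with prob. rho and 1 - x_i with prob. 1 - rho. *)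
Definition noise_op (R : realType) n (rho : R) (g : dnf n) (x : cube n) : R :=
  \sum_(y : cube n)
     (\prod_(i < n) (if y i == x i then rho else 1 - rho)) * (dnf_eval g y)%:R.

From HB Require Import structures.
From mathcomp Require Import all_boot all_order all_algebra.
From mathcomp Require Import reals exp sequences.
From mathcomp Require Import ring lra.
Import Order.TTheory GRing.Theory Num.Theory.
Local Open Scope ring_scope.

(* By the union bound, T_rho g(y0) is at most the sum over the terms t of g of
   the probability that a rho-noisy copy of y0 satisfies t.  The noise is a
   product distribution, so that probability factors over the variables.  A
   term of length at most L = 1000 tau log k is falsified at y0 by one of its
   literals, and that literal survives the noise with probability only
   1 - rho = 1/(10 tau).  A longer term needs each of its > L literals to
   hold, which happens with probability at most rho^L <= exp(-100 log k).
   Either way every term contributes at most 1/(10k), and there are at most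
   k terms. *)

Section TermLiterals.
Context {n : nat}.
Implicit Types (t : dterm n) (i : 'I_n) (b : bool) (l : 'I_n * bool).

Definition term_allows t i b : bool := [forall l in t, (l.1 == i) ==> (b == l.2)].

Definition lits_on t i : {set 'I_n * bool} := [set l in t | l.1 == i].

Lemma term_sat_allows t (y : cube n) :
  term_sat t y = [forall i, term_allows t i (y i)].
Proof.
apply/forallP/forallP => [sat i | allows l].
  apply/forallP => l; apply/implyP => lt; apply/implyP => /eqP <-.
  by have := sat l; rewrite lt.
apply/implyP => lt; have /forallP /(_ l) := allows l.1.
by rewrite lt eqxx.
Qed.

Lemma card_lits_on t : #|t| = (\sum_i #|lits_on t i|)%N.
Proof.
rewrite -sum1_card (partition_big fst predT) //=.
by apply: eq_bigr => i _; rewrite -sum1_card; apply: eq_bigl => l; rewrite inE.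
Qed.

Lemma term_allows_lit {t l b} : l \in t -> term_allows t l.1 b -> b = l.2.
Proof. by move=> lt /forallP /(_ l); rewrite lt eqxx => /eqP. Qed.

Lemma card_lits_on_allows {t i b} : term_allows t i b -> (#|lits_on t i| <= 1)%N.
Proof.
move=> allows; rewrite -(cards1 (i, b)); apply/subset_leq_card/subsetP => l.
rewrite !inE => /andP [lt /eqP li]; subst i.
by rewrite (term_allows_lit lt allows) -surjective_pairing.
Qed.

End TermLiterals.

Lemma prod_le_factor {R : numDomainType} {I : finType} {F : I -> R} j :
  (forall i, 0 <= F i <= 1) -> \prod_i F i <= F j.
Proof.
move=> F01; rewrite (bigD1 j) //=; apply: ler_piMr; first by case/andP: (F01 j).
exact: prodr_ile1.
Qed.

Section NoisyTerms.
Context {R : realType} {n : nat} {rho : R} {x : cube n}.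
Hypotheses (rho_ge : 1 / 2 <= rho) (rho_le1 : rho <= 1).
Implicit Types (t : dterm n) (g : dnf n) (i : 'I_n) (b : bool).

Definition noise_weight i b : R := if b == x i then rho else 1 - rho.

Definition term_marginal t i : R :=
  \sum_b noise_weight i b * (term_allows t i b)%:R.

Lemma rho_ge0 : 0 <= rho.
Proof. by move: rho_ge; lra. Qed.

Lemma noise_weight_ge0 i b : 0 <= noise_weight i b.
Proof. by rewrite /noise_weight; case: ifP => _; rewrite ?rho_ge0 ?subr_ge0. Qed.

Lemma noise_weight_le i b : noise_weight i b <= rho.
Proof. by rewrite /noise_weight; case: ifP => _ //; move: rho_ge; lra. Qed.

Lemma term_marginal_bounds t i : 0 <= term_marginal t i <= 1.
Proof.
have w_sum : noise_weight i true + noise_weight i false = 1.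
  by rewrite /noise_weight; case: (x i) => /=; lra.
have := noise_weight_ge0 i true; have := noise_weight_ge0 i false.
rewrite /term_marginal big_bool.
case: term_allows; case: term_allows => /=; rewrite ?mulr0 ?mulr1 => *.
all: by apply/andP; split; lra.
Qed.

Lemma term_marginal_lit t l : l \in t ->
  term_marginal t l.1 = noise_weight l.1 l.2 * (term_allows t l.1 l.2)%:R.
Proof.
move=> lt; rewrite /term_marginal (bigD1 l.2) //= big1 ?addr0 // => b nb.
case: (boolP (term_allows t l.1 b)) => [/(term_allows_lit lt) bl|_].
  by rewrite bl eqxx in nb.
by rewrite mulr0.
Qed.

Lemma term_marginal_le_pow t i : term_marginal t i <= rho ^+ #|lits_on t i|.
Proof.
have [|[l li]] := set_0Vmem (lits_on t i).
  by move=> ->; rewrite cards0 expr0; case/andP: (term_marginal_bounds t i).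
move: li; rewrite inE => /andP [lt /eqP <-]; rewrite term_marginal_lit //.
case: (boolP (term_allows t l.1 l.2)) => [allows|_]; last first.
  by rewrite mulr0 exprn_ge0 ?rho_ge0.
have : (0 < #|lits_on t l.1| <= 1)%N.
  rewrite (card_lits_on_allows allows) andbT card_gt0.
  by apply/set0Pn; exists l; rewrite inE lt eqxx.
by rewrite -eqn_leq => /eqP <-; rewrite mulr1 expr1 noise_weight_le.
Qed.

Lemma noise_op_term t : noise_op rho [:: t] x = \prod_i term_marginal t i.
Proof.
rewrite /term_marginal bigA_distr_bigA /noise_op; apply: eq_bigr => y _.
have -> : ((dnf_eval [:: t] y)%:R : R) = \prod_i (term_allows t i (y i))%:R.
  rewrite /dnf_eval /= orbF term_sat_allows.
  case: (boolP [forall i, _]) => [/forallP allows | /forallPn [i ni]].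
    by rewrite big1 // => i _; rewrite allows.
  by rewrite (bigD1 i) //= (negbTE ni) mul0r.
by rewrite -big_split.
Qed.

Lemma noise_op_le_sum g : noise_op rho g x <= \sum_(t <- g) noise_op rho [:: t] x.
Proof.
elim: g => [|t g IH].
  by rewrite big_nil /noise_op big1 // => y _; rewrite mulr0.
rewrite big_cons (le_trans _ (lerD (lexx _) IH)) // /noise_op -big_split /=.
apply: ler_sum => y _; rewrite -mulrDr; apply: ler_wpM2l.
- by apply: prodr_ge0 => i _; exact: noise_weight_ge0.
- by rewrite -natrD ler_nat /dnf_eval /= orbF; case: term_sat; case: has.
Qed.

Lemma noise_op_term_le_pow t : noise_op rho [:: t] x <= rho ^+ #|t|.
Proof.
rewrite noise_op_term card_lits_on -prodrXr; apply: ler_prod => i _.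
by rewrite term_marginal_le_pow andbT; case/andP: (term_marginal_bounds t i).
Qed.

Lemma noise_op_term_unsat t : term_sat t x = false -> noise_op rho [:: t] x <= 1 - rho.
Proof.
move/negbT/forallPn => [l]; rewrite negb_imply => /andP [lt xl].
rewrite noise_op_term (le_trans (prod_le_factor l.1 (term_marginal_bounds t))) //.
rewrite term_marginal_lit // /noise_weight eq_sym (negbTE xl).
by apply: ler_piMr; rewrite ?subr_ge0 ?lern1 ?leq_b1.
Qed.

Lemma noise_op_trunc_le (L eps : R) g :
  1 - rho <= eps -> (forall m : nat, L < m%:R -> rho ^+ m <= eps) ->
  dnf_eval (dnf_trunc L g) x = false -> noise_op rho g x <= (size g)%:R * eps.
Proof.
move=> short_le long_le /negbT /hasPn trunc0.
apply: (le_trans (noise_op_le_sum g)).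
rewrite mulr_natl -iter_addr_0 -(count_predT g) -big_const_seq big_seq [leRHS]big_seq.
apply: ler_sum => t tg; have [tL|Lt] := leP (#|t|%:R : R) L.
  apply: le_trans short_le; apply: noise_op_term_unsat; apply/negbTE.
  by apply: trunc0; rewrite mem_filter tL.
exact: le_trans (noise_op_term_le_pow t) (long_le _ Lt).
Qed.

End NoisyTerms.

Lemma one_sub_pow_le_expR {R : realType} (a : R) (m : nat) :
  a <= 1 -> (1 - a) ^+ m <= expR (- (a * m%:R)).
Proof.
move=> a_le1; rewrite -mulNr expRM_natr lerXn2r ?nnegrE ?expR_ge0 //; first lra.
by have := expR_ge1Dx (- a); lra.
Qed.

Lemma ten_mul_le_exp (k : nat) : (2 <= k)%N -> (10 * k <= k ^ 100)%N.
Proof.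
move=> k2; rewrite expnSr leq_mul2r; apply/orP; right.
apply: (@leq_trans (2 ^ 4)) => //; apply: (@leq_trans (k ^ 4)).
  by rewrite leq_exp2r.
by rewrite leq_pexp2l // ltnW.
Qed.

Lemma long_term_bound {R : realType} {k : nat} : (2 <= k)%N ->
  let tau : R := 1000 * k%:R in
  forall m : nat, 1000 * tau * ln (k%:R : R) < m%:R ->
  (1 - 1 / (10 * tau)) ^+ m <= 1 / (10 * k%:R).
Proof.
move=> k2 tau m long.
have k_ge2 : (2 : R) <= k%:R by rewrite (ler_nat R 2 k).
have k_pos : (0 : R) < k%:R by lra.
have a_le1 : 1 / (10 * tau) <= 1 by rewrite ler_pdivrMr /tau; lra.
apply: (le_trans (one_sub_pow_le_expR _ m a_le1)).
have -> : 1 / (10 * tau) = 100 / (1000 * tau) by rewrite /tau; field; lra.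
apply: (@le_trans _ _ (expR (- (100%:R * ln (k%:R : R))))).
  rewrite ler_expR lerN2 mulrAC ler_pdivlMr /tau; last lra.
  by rewrite -mulrA ler_pM2l ?ltr0n // mulrC; exact: ltW.
rewrite expRN expRM_natl lnK ?posrE // -natrX div1r -natrM.
rewrite lef_pV2 ?posrE ?ltr0n ?expn_gt0 ?muln_gt0 ?(ltnW k2) // ler_nat.
exact: ten_mul_le_exp.
Qed.

Theorem claim6p5 (R : realType) (n k : nat) (g : dnf n) (y0 : cube n) :
  (2 <= k)%N -> (size g <= k)%N ->
  let tau : R := 1000 * k%:R in
  let rho : R := 1 - 1 / (10 * tau) in
  dnf_eval (dnf_trunc (1000 * tau * ln (k%:R : R)) g) y0 = false ->
  noise_op rho g y0 <= 1 / 10.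
Proof.
move=> k2 size_g tau rho trunc0.
have k_ge2 : (2 : R) <= k%:R by rewrite (ler_nat R 2 k).
set eps : R := 1 / (10 * k%:R).
have eps_le : eps <= 1 / 20 by rewrite /eps ler_pdivrMr; lra.
have eps_ge0 : 0 <= eps by rewrite /eps divr_ge0; lra.
have one_sub_rho : 1 - rho = eps / 1000 by rewrite /rho /eps /tau; field; lra.
have rho_ge : 1 / 2 <= rho by lra.
have rho_le1 : rho <= 1 by lra.
have short_le : 1 - rho <= eps by lra.
apply: (le_trans (noise_op_trunc_le rho_ge rho_le1 _ _ _ short_le (long_term_bound k2) trunc0)).
have -> : 1 / 10 = k%:R * eps :> R by rewrite /eps; field; lra.
by rewrite ler_wpM2r // ler_nat.
Qed.
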